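(* Let $\pi$ be a signed permutation with $n$ elements and let $H_\pi$ be its circle graph. Then $d_r(\pi) \geq r(A(H_\pi))$, where $r$ denotes rank over $GF(2)$.
   Context: A signed permutation with $n$ elements is a sequence $\pi=(\pi_1,\dots,\pi_n)$ of nonzero integers with $\{|\pi_1|,\dots,|\pi_n|\}=\{1,\dots,n\}$. A reversal replaces a contiguous block $(\pi_i,\pi_{i+1},\dots,\pi_j)$ by $(-\pi_j,\dots,-\pi_{i+1},-\pi_i)$. The reversal distance $d_r(\pi)$ is the minimum number of reversals transforming $\pi$ into the identity $(1,2,\dots,n)$. Construction of $H_\pi$. Arrange cyclically the segments $I_1,\pi_1,I_2,\pi_2,\dots,I_n,\pi_n,I_{n+1},\$$ (and back to $I_1$); the $I_k$ are intermediate segments and $\$$ is an anchor. Endpoint labels: a segment $i>0$ has left endpoint $v_{i-1}$ and right endpoint $v_i$; a segment $-i$ has left endpoint $v_i$ and right endpoint $v_{i-1}$; $\$$ has left endpoint $v_n$ and right endpoint $v_0$; each $I_k$ has as left endpoint the label of the right endpoint of the preceding segment and as right endpoint the label of the left endpoint of the following segment. $G_\pi$ is the 4-regular multigraph on $\{v_0,\dots,v_n\}$ with one edge per segment joining its endpoint labels. A circuit partition (set of closed walks using every edge exactly once in total) determines at each vertex a route (pairing of the four half-edges). $P_A$ is the single Eulerian circuit following the cyclic order of segments; $P_B$ is the circuit partition whose route at each vertex pairs the two non-intermediate half-edges together and the two intermediate half-edges together. A vertex $v$ is oriented if changing the route of $P_A$ at $v$ to that of $P_B$ at $v$ yields a single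 circuit. $H_\pi$ is the graph (loops allowed) on $\{v_0,\dots,v_n\}$ where distinct $u,w$ are adjacent iff their two occurrences interlace in the cyclic vertex sequence of the Eulerian circuit $P_A$, and $v$ is looped iff $v$ is oriented. $A(H)$ is the adjacency matrix over $GF(2)$, with diagonal entry $1$ exactly at looped vertices. *)

From HB Require Import structures.
From mathcomp Require Import all_boot all_order all_algebra.
Set Implicit Arguments. Unset Strict Implicit. Unset Printing Implicit Defensive.
Import GRing.Theory Num.Theory.

Definition signed_perm (n : nat) (s : seq int) : bool :=
  (size s == n) && perm_eq (map absz s) (iota 1 n).

(* Reversal of the block s_i..s_j (0-based positions, i <= j < size s). *)
Definition reversal (i j : nat) (s : seq int) : seq int :=
  take i s ++ map (fun x => (- x)%R) (rev (drop i (take j.+1 s))) ++ drop j.+1 s.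

Definition id_sperm (n : nat) : seq int := map Posz (iota 1 n).

Definition apply_revs (rs : seq (nat * nat)) (s : seq int) : seq int :=
  foldl (fun t ij => reversal ij.1 ij.2 t) s rs.

Definition valid_revs (n : nat) (rs : seq (nat * nat)) : bool :=
  all (fun ij => (ij.1 <= ij.2) && (ij.2 < n)) rs.

Definition sorts (n : nat) (s : seq int) (rs : seq (nat * nat)) : bool :=
  valid_revs n rs && (apply_revs rs s == id_sperm n).

Definition reversal_distance (n : nat) (s : seq int) (d : nat) : Prop :=
  (exists rs, sorts n s rs /\ size rs = d) /\
  (forall rs, sorts n s rs -> d <= size rs).

(* Segments are indexed t = 0 .. 2n+1 in cyclic order:
   t = 2k (k = 0..n)   : intermediate segment I_(k+1)
   t = 2k+1 (k < n)    : segment pi_(k+1)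
   t = 2n+1            : anchor $.
   Vertex v_i is represented by the natural number i.  b = false: left end,
   b = true: right end. *)

Definition seg_left (x : int) : nat := if (0 < x)%R then (absz x).-1 else absz x.
Definition seg_right (x : int) : nat := if (0 < x)%R then absz x else (absz x).-1.

Definition nonint_end (n : nat) (s : seq int) (t : nat) (b : bool) : nat :=
  if t == (2 * n).+1 then (if b then 0 else n)
  else let x := nth 0%R s t./2 in if b then seg_right x else seg_left x.

Definition seg_end (n : nat) (s : seq int) (t : nat) (b : bool) : nat :=
  if odd t then nonint_end n s t b
  else if b then nonint_end n s t.+1 false
  else nonint_end n s (if t == 0 then (2 * n).+1 else t.-1) true.

(* half-edges: (segment, end) *)
Definition hedge (n : nat) := ('I_((2 * n).+2) * bool)%type.

Definition label (n : nat) (s : seq int) (h : hedge n) : nat := seg_end n s h.1 h.2.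
Definition intermediate (n : nat) (h : hedge n) : bool := ~~ odd h.1.

Definition edge_mate (n : nat) (h : hedge n) : hedge n := (h.1, ~~ h.2).

(* route of P_A: right end of segment t is paired with left end of segment t+1 *)
Definition routeA (n : nat) (h : hedge n) : hedge n :=
  if h.2 then (ordS h.1, false) else (ord_pred h.1, true).

(* route of P_B: pair the two non-intermediate half-edges at a vertex together,
   and the two intermediate ones together *)
Definition routeB (n : nat) (s : seq int) (h : hedge n) : hedge n :=
  odflt h [pick y : hedge n | (y != h) && (label s y == label s h)
                              && (intermediate y == intermediate h)].

Definition route_switch (n : nat) (s : seq int) (v : nat) (h : hedge n) : hedge n :=
  if label s h == v then routeB s h else routeA h.

(* The circuit partition given by a route (transition system) consists of a single
   circuit iff all half-edges are connected by route- and edge-steps. *)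
Definition single_circuit (n : nat) (route : hedge n -> hedge n) : bool :=
  [forall x : hedge n, forall y : hedge n,
     connect (fun a b : hedge n => (b == route a) || (b == edge_mate a)) x y].

Definition oriented (n : nat) (s : seq int) (v : nat) : bool :=
  single_circuit (@route_switch n s v).

(* cyclic vertex sequence of the Eulerian circuit P_A
   (the vertex passed after traversing segment t) *)
Definition circuitA (n : nat) (s : seq int) : seq nat :=
  [seq seg_end n s t true | t <- iota 0 (2 * n).+2].

(* the two occurrences of u and w interlace: exactly one occurrence of w lies
   strictly between the two occurrences of u *)
Definition interlace (n : nat) (s : seq int) (u w : nat) : bool :=
  let c := circuitA n s in
  let r := drop (index u c).+1 c in
  count (pred1 w) (take (index u r) r) == 1.

Definition adjH (n : nat) (s : seq int) : 'M['F_2]_n.+1 :=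
  \matrix_(i < n.+1, j < n.+1)
     (if i == j then (oriented n s i : nat)%:R
      else (interlace n s i j : nat)%:R)%R.

(* Read the Eulerian circuit P_A as a cycle of 2n+2 positions (position t is the vertex
   reached after segment t).  Every vertex occurs at exactly two positions, i.e. it is a
   chord of this cycle.  Switching the route at v to that of P_B reconnects the circuit
   crosswise at the two occurrences of v when they have the same parity, and splits off
   the arc between them otherwise; so v is looped iff its chord joins positions of equal
   parity, and two vertices are adjacent iff their chords cross.  A reversal of
   pi_i .. pi_j reflects the block of positions [2i, 2j+1]; this toggles exactly the
   entries (u, w) where both chords have one end in the block, i.e. it adds x x^T for
   the indicator vector x of these chords.  Hence each reversal changes the rank by at most
   one, while the identity has the zero matrix: its chords do not cross and each joins
   positions of different parity. *)

From HB Require Import structures.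
From mathcomp Require Import all_boot all_order all_algebra.
From mathcomp Require Import zify.
Set Implicit Arguments. Unset Strict Implicit. Unset Printing Implicit Defensive.

(** * Cyclic positions *)

Lemma val_ordS m (t : 'I_m) : ordS t = (if t.+1 == m then 0 else t.+1) :> nat.
Proof.
rewrite /=; case: eqP => [->|ne]; first by rewrite modnn.
by rewrite modn_small //; have := ltn_ord t; lia.
Qed.

Lemma val_ord_pred m (t : 'I_m) :
  ord_pred t = (if t == 0 :> nat then m.-1 else t.-1) :> nat.
Proof.
rewrite /=; have ht := ltn_ord t; case: eqP => [->|ne].
  by rewrite add0n modn_small //; lia.
have -> : (t + m).-1 = t.-1 + m by lia.
by rewrite modnDr modn_small //; lia.
Qed.

Lemma ord_pred_eqE m (t a : 'I_m) : (ord_pred t == a) = (t == ordS a).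
Proof. by apply/eqP/eqP => [<-|->]; rewrite ?ord_predK ?ordSK. Qed.

Lemma val_iter_ordS m (x : 'I_m) k : iter k (@ordS m) x = (x + k) %% m :> nat.
Proof.
elim: k => [|k IHk]; first by rewrite addn0 modn_small.
by rewrite iterS /= IHk -addn1 modnDml addn1 addnS.
Qed.

Lemma iter_ordS_neq m (x : 'I_m) k : k.+1 < m -> iter k (@ordS m) (ordS x) != x.
Proof.
move=> hk; rewrite -iterSr -(inj_eq (@ord_inj _)) val_iter_ordS.
rewrite -{2}(modn_small (ltn_ord x)) -{2}[nat_of_ord x]addn0 eqn_modDl.
by rewrite mod0n modn_small.
Qed.

Lemma iter_ordS_onto m (x t : 'I_m) : exists2 k, k < m & t = iter k (@ordS m) x.
Proof.
have hx := ltn_ord x; have ht := ltn_ord t.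
exists ((t + (m - x)) %% m); first by rewrite ltn_mod; lia.
apply: val_inj; rewrite /= val_iter_ordS modnDmr.
have -> : x + (t + (m - x)) = t + m by lia.
by rewrite modnDr modn_small.
Qed.

Lemma odd_ordS n (t : 'I_(2 * n).+2) : odd (ordS t) = ~~ odd t.
Proof.
rewrite val_ordS; case: eqP => //= ht.
have -> : nat_of_ord t = (2 * n).+1 by lia.
by rewrite /= oddM.
Qed.

(** * Orientation *)

Definition circuit_vertex n (s : seq int) t : nat := seg_end n s t true.

Lemma label_false n s (t : 'I_(2 * n).+2) :
  label s (t, false) = circuit_vertex n s (ord_pred t).
Proof.
rewrite /label /circuit_vertex val_ord_pred /seg_end /=.
case: (boolP (odd t)) => ho.
  have t0 : nat_of_ord t != 0 by case: (val t) ho.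
  rewrite (negbTE t0) /=.
  have ht : t = (t.-1).+1 :> nat by lia.
  have -> : odd t.-1 = false by move: ho; rewrite {1}ht /= => /negbTE.
  by rewrite -ht.
case: eqP => [_|t0] /=; first by rewrite oddM.
have ht : t = (t.-1).+1 :> nat by lia.
by move: ho; rewrite {1}ht /= negbK => ->.
Qed.

Definition chord_at n s v (p : nat * nat) : Prop :=
  [/\ p.1 < (2 * n).+2, p.2 < (2 * n).+2, p.1 != p.2 &
      forall t, t < (2 * n).+2 -> (circuit_vertex n s t == v) = (t == p.1) || (t == p.2)].

Lemma chord_atC n s v a b : chord_at n s v (a, b) -> chord_at n s v (b, a).
Proof. by case=> ha hb hab H; split; rewrite //= 1?eq_sym // => t /H; rewrite orbC. Qed.

Definition junction n (A B : 'I_(2 * n).+2) : seq (hedge n) :=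
  [:: (A, true); (B, true); (ordS A, false); (ordS B, false)].

Lemma label_junctionE n s v (A B : 'I_(2 * n).+2) :
  chord_at n s v (nat_of_ord A, nat_of_ord B) ->
  forall z : hedge n, (label s z == v) = (z \in junction A B).
Proof.
case=> _ _ _ H [t []]; rewrite !inE !xpair_eqE /= !andbT !andbF /= ?orbF.
  exact: H.
by rewrite label_false H // !(inj_eq (@ord_inj _)) !ord_pred_eqE.
Qed.

Section Junction.
Variables (n : nat) (s : seq int) (v : nat) (A B : 'I_(2 * n).+2).
Hypothesis chordAB : chord_at n s v (nat_of_ord A, nat_of_ord B).

Lemma label_junction z : z \in junction A B -> label s z = v.
Proof. by move=> hz; apply/eqP; rewrite (label_junctionE chordAB). Qed.

Lemma route_switch_off t : t != A -> t != B ->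
  route_switch s v (t, true) = (ordS t, false) /\
  route_switch s v (ordS t, false) = (t, true).
Proof.
move=> tA tB; rewrite /route_switch !(label_junctionE chordAB) !inE !xpair_eqE /=.
rewrite !andbT !andbF /= !(inj_eq (@ordS_inj _)) (negbTE tA) (negbTE tB) /= ?ordSK.
by rewrite /routeA /= ordSK.
Qed.

Lemma route_switch_junction z : z \in junction A B -> route_switch s v z = routeB s z.
Proof. by move=> /label_junction hz; rewrite /route_switch hz eqxx. Qed.

Lemma routeB_junction (h y : hedge n) : h \in junction A B -> y \in junction A B ->
  y != h -> intermediate y = intermediate h ->
  (forall z, z \in junction A B -> z != h -> intermediate z = intermediate h -> z = y) ->
  routeB s h = y.
Proof.
move=> hJ yJ yh iy uniq_y; rewrite /routeB; case: pickP => [z|].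
  case/andP=> /andP [zh /eqP lz] /eqP iz; apply: uniq_y => //.
  by rewrite -(label_junctionE chordAB) lz (label_junction hJ).
by move/(_ y); rewrite yh iy (label_junction hJ) (label_junction yJ) !eqxx.
Qed.

Lemma routeB_cross : odd A = odd B ->
  routeB s (A, true) = (B, true) /\ routeB s (ordS A, false) = (ordS B, false).
Proof.
have [_ _ /= hAB _] := chordAB; move=> hpar.
split; apply: routeB_junction; rewrite ?inE ?eqxx ?orbT //= /intermediate /= ?odd_ordS ?hpar //;
  try by rewrite xpair_eqE /= ?(inj_eq (@ordS_inj _)) -(inj_eq val_inj) eq_sym (negbTE hAB).
all: by move=> z; rewrite /junction !inE => /or4P [] /eqP -> //=; rewrite ?odd_ordS ?eqxx; lia.
Qed.

Lemma routeB_split : odd A = ~~ odd B ->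
  routeB s (A, true) = (ordS B, false) /\ routeB s (ordS A, false) = (B, true).
Proof.
have [_ _ /= hAB _] := chordAB; move=> hpar.
split; apply: routeB_junction;
  rewrite ?inE ?eqxx ?orbT //= /intermediate /= ?odd_ordS ?hpar ?negbK ?xpair_eqE ?andbF //.
all: by move=> z; rewrite /junction !inE => /or4P [] /eqP -> //=; rewrite ?odd_ordS ?eqxx; lia.
Qed.

End Junction.

Definition circuit_step n (route : hedge n -> hedge n) : rel (hedge n) :=
  fun a b => (b == route a) || (b == edge_mate a).

Lemma edge_mateK n : involutive (@edge_mate n).
Proof. by case=> t b; rewrite /edge_mate /= negbK. Qed.

Section Switching.
Variables (n : nat) (A B : 'I_(2 * n).+2) (r : hedge n -> hedge n).
Hypothesis neqAB : A != B.
Hypothesis r_off : forall t, t != A -> t != B ->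
  r (t, true) = (ordS t, false) /\ r (ordS t, false) = (t, true).

Lemma single_circuit_cross :
  r (A, true) = (B, true) -> r (B, true) = (A, true) ->
  r (ordS A, false) = (ordS B, false) -> r (ordS B, false) = (ordS A, false) ->
  single_circuit r.
Proof.
move=> rA rB rA' rB'.
have rK : involutive r.
  case=> t [].
    case: (eqVneq t A) => [->|tA]; first by rewrite rA rB.
    case: (eqVneq t B) => [->|tB]; first by rewrite rB rA.
    by have [-> ->] := r_off tA tB.
  rewrite -[t]ord_predK; set u := ord_pred t.
  case: (eqVneq u A) => [->|uA]; first by rewrite rA' rB'.
  case: (eqVneq u B) => [->|uB]; first by rewrite rB' rA'.
  by have [rT ->] := r_off uA uB; rewrite rT.
have step_sym : symmetric (circuit_step r).
  move=> a b; rewrite /circuit_step; congr orb; apply/eqP/eqP => ->;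
    by rewrite ?rK ?edge_mateK.
pose x0 : hedge n := (ordS A, false).
have reach_false k : k < (2 * n).+2 ->
    connect (circuit_step r) x0 (iter k (@ordS _) (ordS A), false).
  elim: k => [|k IHk] hk; first exact: connect0.
  have tA := iter_ordS_neq A hk; set t := iter k _ _ in tA IHk *.
  rewrite iterS -/t; case: (eqVneq t B) => [->|tB].
    by apply: connect1; rewrite /circuit_step rA' eqxx.
  apply: connect_trans (IHk (ltnW hk)) _; apply: (connect_trans (y := (t, true))).
    by apply: connect1; rewrite /circuit_step eqxx orbT.
  by apply: connect1; rewrite /circuit_step (r_off tA tB).1 eqxx.
have reach y : connect (circuit_step r) x0 y.
  case: y => t b; have [k hk ->] := iter_ordS_onto (ordS A) t.
  case: b; last exact: reach_false.
  by apply: connect_trans (reach_false k hk) (connect1 _); rewrite /circuit_step eqxx orbT.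
apply/forallP => x; apply/forallP => y.
by apply: connect_trans (reach y); rewrite (sym_connect_sym step_sym).
Qed.

(* The arc of positions strictly after [A] up to [B] (or after [B] up to [A]) is
   closed under both steps: it is a circuit of its own. *)
Let in_arc (t : nat) := (A < t <= B) || (B < t <= A).

Let in_arc_ordS u : u != A -> u != B -> in_arc (ordS u) = in_arc u.
Proof.
rewrite /in_arc -!(inj_eq val_inj) val_ordS /=.
by have := ltn_ord A; have := ltn_ord B; have := ltn_ord u; case: ifP => /eqP; lia.
Qed.

Let in_arc_ordS_A : in_arc (ordS A) = in_arc B.
Proof.
rewrite /in_arc val_ordS; have := ltn_ord B; have := ltn_ord A.
by move: neqAB; rewrite -(inj_eq val_inj) /=; case: ifP => /eqP; lia.
Qed.

Let in_arc_ordS_B : in_arc (ordS B) = in_arc A.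
Proof.
rewrite /in_arc val_ordS; have := ltn_ord B; have := ltn_ord A.
by move: neqAB; rewrite -(inj_eq val_inj) /=; case: ifP => /eqP; lia.
Qed.

Lemma single_circuit_split :
  r (A, true) = (ordS B, false) -> r (B, true) = (ordS A, false) ->
  r (ordS A, false) = (B, true) -> r (ordS B, false) = (A, true) ->
  ~~ single_circuit r.
Proof.
move=> rA rB rA' rB'.
pose X := [pred h : hedge n | in_arc h.1].
have X_closed : closed (circuit_step r) X.
  move=> x y /orP [] /eqP -> {y}; last by case: x.
  case: x => t []; rewrite !inE /=.
    case: (eqVneq t A) => [->|tA]; first by rewrite rA in_arc_ordS_B.
    case: (eqVneq t B) => [->|tB]; first by rewrite rB in_arc_ordS_A.
    by rewrite (r_off tA tB).1 in_arc_ordS.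
  rewrite -[t]ord_predK; set u := ord_pred t.
  case: (eqVneq u A) => [->|uA]; first by rewrite rA' in_arc_ordS_A.
  case: (eqVneq u B) => [->|uB]; first by rewrite rB' in_arc_ordS_B.
  by rewrite (r_off uA uB).2 in_arc_ordS.
apply/negP => /forallP /(_ (B, true)) /forallP /(_ (A, true)) /(closed_connect X_closed).
rewrite !inE /= /in_arc !leqnn !ltnn /=; move: neqAB; rewrite -(inj_eq val_inj) /=; lia.
Qed.

End Switching.

Lemma oriented_chord n s v a b : chord_at n s v (a, b) -> oriented n s v = (odd a == odd b).
Proof.
move=> chord; have [ha hb hab _] := chord.
pose A := Ordinal ha; pose B := Ordinal hb.
have chAB : chord_at n s v (nat_of_ord A, nat_of_ord B) by [].
have chBA := chord_atC chAB.
have neqAB : A != B by rewrite -(inj_eq val_inj).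
have r_off := route_switch_off chAB.
have [JA JB JA' JB'] : [/\ (A, true) \in junction A B, (B, true) \in junction A B,
    (ordS A, false) \in junction A B & (ordS B, false) \in junction A B].
  by rewrite !inE !eqxx ?orbT.
rewrite /oriented.
case: (boolP (odd a == odd b)) => /eqP hpar.
  have [rA rA'] := routeB_cross chAB hpar; have [rB rB'] := routeB_cross chBA (esym hpar).
  by apply: (single_circuit_cross r_off); rewrite ?(route_switch_junction chAB) //.
have hpar' : odd A = ~~ odd B by move: hpar => /=; case: (odd a); case: (odd b).
have [rA rA'] := routeB_split chAB hpar'.
have [rB rB'] : routeB s (B, true) = (ordS A, false) /\ routeB s (ordS B, false) = (A, true).
  by apply: routeB_split chBA _; rewrite hpar' negbK.
apply/negbTE/(single_circuit_split neqAB r_off); by rewrite ?(route_switch_junction chAB) //.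
Qed.

(** * Interlacement *)

Definition betw (a b x : nat) : bool := (a < x < b) || (b < x < a).

Lemma betwC a b x : betw a b x = betw b a x.
Proof. by rewrite /betw orbC. Qed.

Definition between_occurrences (T : eqType) (u : T) (c : seq T) : seq T :=
  let r := drop (index u c).+1 c in take (index u r) r.

Lemma interlaceE n s u w :
  interlace n s u w = (count (pred1 w) (between_occurrences u (circuitA n s)) == 1).
Proof. by []. Qed.

Lemma index_first (T : eqType) (x0 : T) (c : seq T) u i : i < size c ->
  nth x0 c i = u -> (forall t, t < i -> nth x0 c t != u) -> index u c = i.
Proof.
move=> hi hu before; have uc : u \in c by rewrite -hu mem_nth.
case: (ltngtP (index u c) i) => // h; first by have := before _ h; rewrite nth_index // eqxx.
by have := before_find x0 h; rewrite /= hu eqxx.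
Qed.

Lemma count_between_occurrences (T : eqType) (f : nat -> T) m u w a b x y :
  a < b < m -> x != y ->
  (forall t, t < m -> (f t == u) = (t == a) || (t == b)) ->
  (forall t, t < m -> (f t == w) = (t == x) || (t == y)) ->
  count (pred1 w) (between_occurrences u (map f (iota 0 m))) = betw a b x + betw a b y.
Proof.
move=> /andP [ab bm] xy Hu Hw; set c := map f (iota 0 m).
have nth_c t : t < m -> nth (f 0) c t = f t.
  by move=> ht; rewrite (nth_map 0) ?size_iota // nth_iota.
have sc : size c = m by rewrite size_map size_iota.
have ia : index u c = a.
  apply: (@index_first _ (f 0)); rewrite ?sc ?nth_c; try lia.
    by apply/eqP; rewrite Hu ?eqxx //; lia.
  by move=> t ht; rewrite nth_c ?Hu; lia.
have ib : index u (drop a.+1 c) = b - a.+1.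
  apply: (@index_first _ (f 0)); rewrite ?size_drop ?sc; try lia.
    by rewrite nth_drop nth_c; [apply/eqP; rewrite Hu; lia | lia].
  by move=> t ht; rewrite nth_drop nth_c ?Hu; lia.
rewrite /between_occurrences ia ib -map_drop -map_take drop_iota take_iota count_map.
rewrite (@eq_in_count _ _ (predU (pred1 x) (pred1 y))); last first.
  by move=> t; rewrite mem_iota => /andP [_ ht] /=; apply: Hw; lia.
have -> : count (predU (pred1 x) (pred1 y)) (iota (0 + a.+1) (minn (b - a.+1) (m - a.+1)))
          = count (pred1 x) (iota a.+1 (b - a.+1)) + count (pred1 y) (iota a.+1 (b - a.+1)).
  rewrite -count_predUI add0n; have -> : minn (b - a.+1) (m - a.+1) = b - a.+1 by lia.
  rewrite (@eq_count _ (predI _ _) pred0) ?count_pred0 ?addn0 // => t /=.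
  by apply/andP => -[/eqP -> /eqP exy]; rewrite exy eqxx in xy.
rewrite !count_uniq_mem ?iota_uniq // !mem_iota /betw.
by congr (nat_of_bool _ + nat_of_bool _); lia.
Qed.

Lemma interlace_chord n s u w au bu aw bw :
  chord_at n s u (au, bu) -> chord_at n s w (aw, bw) ->
  interlace n s u w = betw au bu aw (+) betw au bu bw.
Proof.
wlog lt_ab : au bu / au < bu.
  move=> wlog_ab chu chw; have [_ _ /= neq_ab _] := chu.
  case: (ltngtP au bu) => h; first exact: wlog_ab h chu chw.
    by rewrite (wlog_ab bu au h (chord_atC chu) chw) !(betwC bu au).
  by rewrite h eqxx in neq_ab.
move=> [_ hbu _ Hu] [_ _ /= xy Hw].
rewrite interlaceE (count_between_occurrences _ xy Hu Hw); last by rewrite lt_ab.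
by case: (betw _ _ aw); case: (betw _ _ bw).
Qed.

(** * Every vertex occurs twice on the circuit *)

Lemma circuit_vertex_even n s k : k < n -> circuit_vertex n s k.*2 = seg_left (nth 0%R s k).
Proof.
move=> hk; rewrite /circuit_vertex /seg_end odd_double /nonint_end.
have -> : (k.*2.+1 == (2 * n).+1) = false by apply/eqP; lia.
by rewrite /= uphalf_double.
Qed.

Lemma circuit_vertex_odd n s k : k < n -> circuit_vertex n s k.*2.+1 = seg_right (nth 0%R s k).
Proof.
move=> hk; rewrite /circuit_vertex /seg_end /= odd_double /nonint_end.
have -> : (k.*2.+1 == (2 * n).+1) = false by apply/eqP; lia.
by rewrite /= uphalf_double.
Qed.

Lemma circuit_vertex_2n n s : circuit_vertex n s n.*2 = n.
Proof. by rewrite /circuit_vertex /seg_end odd_double /nonint_end -mul2n eqxx. Qed.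

Lemma circuit_vertex_2n1 n s : circuit_vertex n s n.*2.+1 = 0.
Proof. by rewrite /circuit_vertex /seg_end /= odd_double /nonint_end -mul2n eqxx. Qed.

Definition segment_ends (x : int) : seq nat := [:: seg_left x; seg_right x].

Lemma map_circuit_vertex_iota n s k : k <= n -> size s = n ->
  map (circuit_vertex n s) (iota 0 k.*2) = flatten (map segment_ends (take k s)).
Proof.
move=> + hs; elim: k => [|k IHk] hk; first by rewrite take0.
rewrite doubleS -addn2 iotaD map_cat IHk; last by lia.
rewrite (take_nth 0%R) ?hs // -cats1 map_cat flatten_cat /= ?cats0 /segment_ends add0n.
by rewrite circuit_vertex_even ?circuit_vertex_odd //; lia.
Qed.

Lemma circuitAE n s : size s = n ->
  circuitA n s = flatten (map segment_ends s) ++ [:: n; 0].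
Proof.
move=> hs; have -> : circuitA n s = map (circuit_vertex n s) (iota 0 n.*2) ++ [:: n; 0].
  rewrite /circuitA -mul2n -addn2 iotaD map_cat; congr (_ ++ _).
  by have := circuit_vertex_2n n s; have := circuit_vertex_2n1 n s;
    rewrite /circuit_vertex -mul2n /= add0n => -> ->.
by rewrite map_circuit_vertex_iota // take_oversize ?hs.
Qed.

Lemma count_segment_ends (x : int) v : x != 0%R ->
  (seg_left x == v) + (seg_right x == v) = (absz x == v.+1) + (absz x == v).
Proof. by case: x => [[|k]|k] //= _; rewrite /seg_left /seg_right /= addnC. Qed.

Lemma count_circuitA n s v : signed_perm n s -> v <= n -> count (pred1 v) (circuitA n s) = 2.
Proof.
case/andP => /eqP hs hperm hv.
have nz : all (fun x : int => x != 0%R) s.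
  apply/allP => x hx; have : absz x \in iota 1 n by rewrite -(perm_mem hperm) map_f.
  by rewrite mem_iota; case: x hx => [[|k]|k].
have count_abs k : count (fun x : int => absz x == k) s = (k \in iota 1 n).
  by rewrite -count_uniq_mem ?iota_uniq // -(permP hperm) count_map.
have count_flat l : all (fun x : int => x != 0%R) l ->
    count (pred1 v) (flatten (map segment_ends l)) =
    count (fun x => absz x == v.+1) l + count (fun x => absz x == v) l.
  elim: l => [|x l IHl] //= /andP [hx hl].
  by rewrite IHl // addnA count_segment_ends //; lia.
rewrite circuitAE // count_cat count_flat // !count_abs !mem_iota /=.
by case: v {count_flat} hv => [|v] hv /=; lia.
Qed.

Lemma count_mem1_nth (T : eqType) (x0 v : T) (c : seq T) : count (pred1 v) c = 1 ->
  exists2 a, a < size c & forall t, t < size c -> (nth x0 c t == v) = (t == a).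
Proof.
elim: c => [|x c IHc] //=; case: (eqVneq x v) => [->|xv] /=.
  rewrite add1n => -[] /eqP; rewrite -leqn0 leqNgt -has_count has_pred1 => vNc.
  exists 0 => // -[|t] ht /=; first by rewrite !eqxx.
  by case: eqP => // vt; rewrite -vt mem_nth in vNc.
rewrite add0n => /IHc [a ha Ha]; exists a.+1 => // -[|t] ht /=; first exact/negbTE.
exact: Ha.
Qed.

Lemma count_mem2_nth (T : eqType) (x0 v : T) (c : seq T) : count (pred1 v) c = 2 ->
  exists a b, [/\ a < size c, b < size c, a != b &
    forall t, t < size c -> (nth x0 c t == v) = (t == a) || (t == b)].
Proof.
elim: c => [|x c IHc] //=; case: (eqVneq x v) => [->|xv] /=.
  rewrite add1n => -[] /(count_mem1_nth x0) [a ha Ha].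
  by exists 0, a.+1; split => // -[|t] ht; rewrite /= ?eqxx //; exact: Ha.
rewrite add0n => /IHc [a [b [ha hb hab Hab]]]; exists a.+1, b.+1; split => //.
by move=> [|t] ht /=; [exact/negbTE | exact: Hab].
Qed.

Lemma exists_chord_at n s v : signed_perm n s -> v <= n -> exists p, chord_at n s v p.
Proof.
move=> hs hv; have [a [b [ha hb hab Hab]]] := count_mem2_nth 0 (count_circuitA hs hv).
have size_c : size (circuitA n s) = (2 * n).+2 by rewrite size_map size_iota.
rewrite size_c in ha hb Hab; exists (a, b); split => // t ht.
by rewrite -Hab // (nth_map 0) ?size_iota // nth_iota.
Qed.

(** * Reversals *)

Lemma size_reversal i j (s : seq int) : i <= j -> j < size s -> size (reversal i j s) = size s.
Proof.
move=> hij hj; rewrite /reversal !size_cat size_map size_rev !size_drop !size_take.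
case: (ltnP i (size s)) => h1; case: (ltnP j.+1 (size s)) => h2.
all: by set z := size s in hj h1 h2 *; lia.
Qed.

Lemma nth_reversal i j (s : seq int) k : i <= j -> j < size s ->
  nth 0%R (reversal i j s) k =
  if i <= k <= j then (- nth 0%R s (i + j - k))%R else nth 0%R s k.
Proof.
move=> hij hj; rewrite /reversal nth_cat size_take.
have -> : (if i < size s then i else size s) = i by case: ltnP => //; lia.
case: (ltnP k i) => hki /=; first by rewrite nth_take.
rewrite nth_cat size_map size_rev size_drop size_take.
have -> : (if j.+1 < size s then j.+1 else size s) = j.+1 by case: ltnP => //; lia.
case: (ltnP (k - i) (j.+1 - i)) => hk.
  have -> : k <= j by lia.
  have sz : size (drop i (take j.+1 s)) = j.+1 - i.
    by rewrite size_drop size_take; case: ltnP; lia.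
  rewrite (nth_map 0%R) ?size_rev ?sz // nth_rev ?sz // nth_drop nth_take; last by lia.
  by congr (- nth _ _ _)%R; lia.
have -> : k <= j = false by lia.
by rewrite nth_drop; congr nth; lia.
Qed.

Lemma signed_perm_reversal n i j s : signed_perm n s -> i <= j -> j < n ->
  signed_perm n (reversal i j s).
Proof.
case/andP => /eqP hs hperm hij hj; apply/andP; split; first by rewrite size_reversal ?hs.
apply: perm_trans hperm.
have {2}-> : s = take i s ++ drop i (take j.+1 s) ++ drop j.+1 s.
  by rewrite catA -{1}(take_takel s (_ : i <= j.+1)) ?cat_take_drop //; lia.
rewrite /reversal !map_cat perm_cat2l perm_cat2r -map_comp.
rewrite (@eq_map _ _ (absz \o _) absz); last by move=> x /=; rewrite abszN.
by rewrite map_rev perm_rev.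
Qed.

Lemma seg_left_opp x : seg_left (- x)%R = seg_right x.
Proof. by case: x => [[|k]|k]. Qed.

Lemma seg_right_opp x : seg_right (- x)%R = seg_left x.
Proof. by case: x => [[|k]|k]. Qed.

Definition in_block (lo hi x : nat) : bool := lo <= x <= hi.
Definition flip (lo hi x : nat) : nat := if in_block lo hi x then lo + hi - x else x.

Lemma flipK lo hi : involutive (flip lo hi).
Proof.
move=> x; rewrite /flip; case h1: (in_block lo hi x); case: ifP => h2;
  by rewrite /in_block in h1 h2 *; lia.
Qed.

(* Reversing the block [pi_i .. pi_j] reverses the circuit between positions [2i]
   and [2j+1]: the segments [I_(i+1) .. pi_(j+1)] come out in reverse order. *)
Lemma circuit_vertex_reversal n i j s t : i <= j -> j < n -> size s = n -> t < (2 * n).+2 ->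
  circuit_vertex n (reversal i j s) t = circuit_vertex n s (flip i.*2 j.*2.+1 t).
Proof.
move=> hij hj hs ht; rewrite /flip /in_block.
case: (ltnP t n.*2) => htn; last first.
  have -> : (i.*2 <= t <= j.*2.+1) = false by lia.
  have [->|->] : t = n.*2 \/ t = n.*2.+1 by lia.
    by rewrite !circuit_vertex_2n.
  by rewrite !circuit_vertex_2n1.
have := odd_double_half t; set k := t./2 => htk; have hk : k < n by lia.
have hs' : j < size s by rewrite hs.
case: (boolP (odd t)) htk => ho /= htk.
  have -> : t = k.*2.+1 by lia.
  rewrite circuit_vertex_odd // nth_reversal //.
  case: (boolP (i <= k <= j)) => hr.
    have -> : i.*2 <= k.*2.+1 <= j.*2.+1 by lia.
    have -> : i.*2 + j.*2.+1 - k.*2.+1 = (i + j - k).*2 by lia.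
    by rewrite circuit_vertex_even ?seg_right_opp //; lia.
  have -> : (i.*2 <= k.*2.+1 <= j.*2.+1) = false by lia.
  by rewrite circuit_vertex_odd.
have -> : t = k.*2 by lia.
rewrite circuit_vertex_even // nth_reversal //.
case: (boolP (i <= k <= j)) => hr.
  have -> : i.*2 <= k.*2 <= j.*2.+1 by lia.
  have -> : i.*2 + j.*2.+1 - k.*2 = (i + j - k).*2.+1 by lia.
  by rewrite circuit_vertex_odd ?seg_left_opp //; lia.
have -> : (i.*2 <= k.*2 <= j.*2.+1) = false by lia.
by rewrite circuit_vertex_even.
Qed.

Lemma chord_at_reversal n i j s v a b : i <= j -> j < n -> size s = n ->
  chord_at n s v (a, b) ->
  chord_at n (reversal i j s) v (flip i.*2 j.*2.+1 a, flip i.*2 j.*2.+1 b).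
Proof.
move=> hij hj hs [/= ha hb hab H].
have flip_lt x : x < (2 * n).+2 -> flip i.*2 j.*2.+1 x < (2 * n).+2.
  by rewrite /flip /in_block; case: ifP; lia.
split=> /=; rewrite ?flip_lt //; first by rewrite (inj_eq (can_inj (flipK i.*2 j.*2.+1))).
move=> t ht; rewrite circuit_vertex_reversal // H; last exact: flip_lt.
by rewrite !(can2_eq (flipK _ _) (flipK _ _)).
Qed.

(** * The rank bound *)

Local Notation b2F b := ((b : nat)%:R : 'F_2)%R.

Lemma b2F_addb (a b : bool) : b2F (a (+) b) = (b2F a + b2F b)%R.
Proof. by case: a; case: b; apply/eqP. Qed.

Lemma b2F_andb (a b : bool) : b2F (a && b) = (b2F a * b2F b)%R.
Proof. by case: a; case: b; apply/eqP. Qed.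

(* The adjacency matrix of the circle graph of a family of chords [P i] of a cycle,
   with a loop at chords joining positions of equal parity. *)
Definition chord_mx m (P : 'I_m -> nat * nat) : 'M['F_2]_m :=
  \matrix_(i, j) if i == j then b2F (odd (P i).1 == odd (P i).2)
                 else b2F (betw (P i).1 (P i).2 (P j).1 (+) betw (P i).1 (P i).2 (P j).2).

Lemma adjH_chord_mx n s (P : 'I_n.+1 -> nat * nat) :
  (forall v : 'I_n.+1, chord_at n s v (P v)) -> adjH n s = chord_mx P.
Proof.
move=> chP; apply/matrixP => i j; rewrite !mxE; case: eqVneq => [_|_].
  by have := chP i; case: (P i) => a b /oriented_chord ->.
have := chP i; have := chP j; case: (P i) => a b; case: (P j) => c d chj chi.
by rewrite (interlace_chord chi chj).
Qed.

Lemma chord_at_disjoint n s v w a b c d : chord_at n s v (a, b) -> chord_at n s w (c, d) ->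
  v != w -> [&& a != c, a != d, b != c & b != d].
Proof.
move=> [/= ha hb _ Hv] [/= hc hd _ Hw] vw.
have [ea eb] : circuit_vertex n s a = v /\ circuit_vertex n s b = v.
  by split; apply/eqP; rewrite Hv // eqxx ?orbT.
have [ec ed] : circuit_vertex n s c = w /\ circuit_vertex n s d = w.
  by split; apply/eqP; rewrite Hw // eqxx ?orbT.
have neq x y : circuit_vertex n s x = v -> circuit_vertex n s y = w -> x != y.
  by move=> hx hy; apply/eqP => exy; rewrite -hx -hy exy eqxx in vw.
by rewrite !neq.
Qed.

Lemma odd_flip lo hi x : odd (lo + hi) -> odd (flip lo hi x) = in_block lo hi x (+) odd x.
Proof.
rewrite /flip; case: ifP => //= hx odd_lohi.
by rewrite oddB ?odd_lohi //; move: hx; rewrite /in_block; lia.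
Qed.

Lemma betw_flip lo hi a b x : a != b -> a != x -> b != x ->
  betw (flip lo hi a) (flip lo hi b) (flip lo hi x) =
  betw a b x (+) ((in_block lo hi a (+) in_block lo hi b) && in_block lo hi x).
Proof.
rewrite /flip /betw => /eqP ab /eqP ax /eqP bx.
by case: (boolP (in_block lo hi a)); case: (boolP (in_block lo hi b));
  case: (boolP (in_block lo hi x)); rewrite /in_block => ha hb hx; lia.
Qed.

Definition straddle_col m lo hi (P : 'I_m -> nat * nat) : 'cV['F_2]_m :=
  \col_i b2F (in_block lo hi (P i).1 (+) in_block lo hi (P i).2).

Lemma chord_mx_flip m (P : 'I_m -> nat * nat) lo hi : odd (lo + hi) ->
  (forall i, (P i).1 != (P i).2) ->
  (forall i j, i != j ->
     [&& (P i).1 != (P j).1, (P i).1 != (P j).2, (P i).2 != (P j).1 & (P i).2 != (P j).2]) ->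
  chord_mx P = (chord_mx (fun i => (flip lo hi (P i).1, flip lo hi (P i).2))
                + straddle_col lo hi P *m (straddle_col lo hi P)^T)%R.
Proof.
move=> odd_lohi chordP disjP; apply/matrixP => i j.
rewrite !mxE big_ord1 !mxE /=.
case: eqVneq => [<-|ij]; rewrite -b2F_andb -b2F_addb; congr (GRing.natmul 1 (nat_of_bool _)).
  rewrite !odd_flip // andbb.
  by case: (odd _); case: (odd _); case: (in_block _ _ _); case: (in_block _ _ _).
have := chordP i; have := chordP j; have := disjP i j ij.
case: (P i) => a b; case: (P j) => c d /= /and4P [ac ad bc bd] cd ab.
rewrite !betw_flip // ?(eq_sym b) //.
by case: (betw a b c); case: (betw a b d); case: (in_block _ _ a); case: (in_block _ _ b);
  case: (in_block _ _ c); case: (in_block _ _ d).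
Qed.

Lemma mxrank_add_mul_col (F : fieldType) m n (A : 'M[F]_(m, n)) (u : 'cV[F]_m) (v : 'rV[F]_n) :
  \rank (A + u *m v)%R <= (\rank A).+1.
Proof.
apply: leq_trans (mxrank_add _ _) _; rewrite -[(\rank A).+1]addn1 leq_add2l.
exact: leq_trans (mxrankM_maxl _ _) (rank_leq_col _).
Qed.

Lemma adjH_reversal n s i j : signed_perm n s -> i <= j -> j < n ->
  \rank (adjH n s) <= (\rank (adjH n (reversal i j s))).+1.
Proof.
move=> hsp hij hj; have hs : size s = n by case/andP: hsp => /eqP.
have [P chP] : exists P : 'I_n.+1 -> nat * nat, forall v : 'I_n.+1, chord_at n s v (P v).
  exact: fin_all_exists (fun v : 'I_n.+1 => exists_chord_at hsp (ltn_ord v)).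
pose P' (v : 'I_n.+1) := (flip i.*2 j.*2.+1 (P v).1, flip i.*2 j.*2.+1 (P v).2).
have chP' (v : 'I_n.+1) : chord_at n (reversal i j s) v (P' v).
  by have := chP v; rewrite /P'; case: (P v) => a b; apply: chord_at_reversal.
rewrite (adjH_chord_mx chP) (adjH_chord_mx chP') (@chord_mx_flip _ P i.*2 j.*2.+1).
- exact: mxrank_add_mul_col.
- by rewrite addnS /= oddD !odd_double.
- by move=> v; have [] := chP v.
move=> v w vw; have := chP v; have := chP w; case: (P v) => a b; case: (P w) => c d chw chv.
by apply: chord_at_disjoint chv chw _; rewrite (inj_eq val_inj).
Qed.

(* In the identity, [v_0] closes the circuit and [v_(k+1)] joins [pi_(k+1)] to [I_(k+2)]. *)
Definition id_chord n (v : nat) : nat * nat :=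
  if v is k.+1 then (k.*2.+1, k.*2.+2) else (0, (2 * n).+1).

Lemma chord_at_id n (v : 'I_n.+1) : chord_at n (id_sperm n) v (id_chord n v).
Proof.
have hv := ltn_ord v.
have cv_even k : k < n -> circuit_vertex n (id_sperm n) k.*2 = k.
  by move=> hk; rewrite circuit_vertex_even // (nth_map 0) ?size_iota // nth_iota.
have cv_odd k : k < n -> circuit_vertex n (id_sperm n) k.*2.+1 = k.+1.
  by move=> hk; rewrite circuit_vertex_odd // (nth_map 0) ?size_iota // nth_iota.
split; try by case: (nat_of_ord v) hv => [|k] /= hv; lia.
move=> t ht; have := odd_double_half t; set k := t./2 => htk.
case: (ltnP k n) => hk; case: (boolP (odd t)) htk => /= _ htk.
- by rewrite -htk cv_odd //; case: (nat_of_ord v) hv => [|w] /= hv; lia.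
- by rewrite -htk cv_even //; case: (nat_of_ord v) hv => [|w] /= hv; lia.
- have -> : t = n.*2.+1 by lia.
  by rewrite circuit_vertex_2n1; case: (nat_of_ord v) hv => [|w] /= hv; lia.
have -> : t = n.*2 by lia.
by rewrite circuit_vertex_2n; case: (nat_of_ord v) hv => [|w] /= hv; lia.
Qed.

Lemma chord_mx_id_chord n : chord_mx (fun v : 'I_n.+1 => id_chord n v) = 0%R.
Proof.
apply/matrixP => a b; rewrite !mxE; have ha := ltn_ord a; have hb := ltn_ord b.
case: eqVneq => [_|ab].
  by case: (nat_of_ord a) => [|k] /=; rewrite ?oddM ?odd_double ?andbF.
have {}ab : nat_of_ord a != b by rewrite (inj_eq val_inj).
suff -> : betw (id_chord n a).1 (id_chord n a).2 (id_chord n b).1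
          (+) betw (id_chord n a).1 (id_chord n a).2 (id_chord n b).2 = false by [].
move: ab ha hb; rewrite /id_chord /betw.
by case: (nat_of_ord a) => [|k]; case: (nat_of_ord b) => [|l] /= ab ha hb; lia.
Qed.

Lemma rank_adjH_le_sorting n s rs : signed_perm n s -> sorts n s rs ->
  \rank (adjH n s) <= size rs.
Proof.
elim: rs s => [|[i j] rs IHrs] s hs /andP [/= valid_rs /eqP sorted].
  rewrite /= in sorted.
  by rewrite sorted (adjH_chord_mx (@chord_at_id n)) chord_mx_id_chord mxrank0.
case/andP: valid_rs => /andP [hij hj] valid_rs.
apply: leq_trans (adjH_reversal hs hij hj) _; rewrite ltnS.
by apply: IHrs; [exact: signed_perm_reversal | rewrite /sorts valid_rs sorted eqxx].
Qed.

Theorem mainTheorem2 (n : nat) (s : seq int) (hs : signed_perm n s)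
  (d : nat) (hd : reversal_distance n s d) :
  \rank (adjH n s) <= d.
Proof. by case: hd => -[rs [sorting <-]] _; exact: rank_adjH_le_sorting sorting. Qed.
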